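(* For every subgroup $H\le G_{d,k}$, the multicomplex $\widetilde{\mathfrak X}_{d,k}(H)$ is link-connected.
   Context: Fix $d,k\ge1$, $[\![d]\!]=\{0,\dots,d\}$. $G_{d,k}=\langle\alpha_0,\dots,\alpha_d\mid\alpha_i^k=e\rangle$; for $J\subseteq[\![d]\!]$, $K_J=\langle\alpha_j:j\in J\rangle$, $\widehat J=[\![d]\!]\setminus J$, $\widehat i=\widehat{\{i\}}$. For $H\le G_{d,k}$, $g\in G_{d,k}$, $J\subseteq[\![d]\!]$ write $[K_{\widehat J}g]_H=\{K_{\widehat J}gh:h\in H\}$. The multicomplex $\widetilde{\mathfrak X}_{d,k}(H)$: its multicells of dimension $|J|-1$ are the classes $[K_{\widehat J}g]_H$ (for $J=[\![d]\!]$ these are the $[g]_H$, identified with left cosets $gH$); $[K_{\widehat J}g]_H$ lies over the cell $\Phi([K_{\widehat J}g]_H)=\{[K_{\widehat i}g]_H:i\in J\}$ (well defined), the underlying simplicial complex $\mathfrak X_{d,k}(H)$ consists of all such cells, and the multiplicity of a cell $\sigma$ is $|\Phi^{-1}(\sigma)|$; containment is $[K_{\widehat I}g]_H\preceq[K_{\widehat J}g]_H$ for $I\subseteq J$ (so the boundary multicells of $[K_{\widehat J}g]_H$ are the $[K_{\widehat{J\setminus\{l\}}}g]_H$, $l\in J$). A multicomplex is link-connected if for every multicell $\mathfrak a$ of dimension $j\le d-2$ (including the empty multicell, $j=-1$) the multigraph whose vertices are the $(j+1)$-multicells containing $\mathfrak a$ and whose edges are the $(j+2)$-multicells containing $\mathfrak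 a$ (each joining the two $(j+1)$-multicells containing $\mathfrak a$ that it contains) is connected. *)

From mathcomp Require Import all_boot.
From Stdlib Require Import Relation_Operators.
Set Implicit Arguments. Unset Strict Implicit. Unset Printing Implicit Defensive.

(* The group G_{d,k} = < alpha_0..alpha_d | alpha_i^k = e > (free product of
   d+1 copies of Z/k), modelled by its normal forms: reduced words, i.e.
   sequences of letters (i, a) standing for alpha_i^a with 0 < a < k and
   consecutive letters having distinct indices.  Indices live in 'I_d.+1,
   i.e. [[d]] = {0,...,d}. *)

Definition letter (d : nat) := ('I_d.+1 * nat)%type.
Definition word (d : nat) := seq (letter d).

Fixpoint adjdistinct d (w : word d) : bool :=
  match w with
  | x :: ((y :: _) as w') => (x.1 != y.1) && adjdistinct w'
  | _ => true
  end.

Definition reduced d k (w : word d) : bool :=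
  all (fun x => (0 < x.2 < k)%N) w && adjdistinct w.

Definition push d k (x : letter d) (w : word d) : word d :=
  let a := x.2 %% k in
  if a == 0 then w else
  match w with
  | y :: w' => if x.1 == y.1 then
                 (if (a + y.2) %% k == 0 then w' else (x.1, (a + y.2) %% k) :: w')
               else (x.1, a) :: w
  | [::] => [:: (x.1, a)]
  end.

Definition gmul d k (u v : word d) : word d := foldr (@push d k) v u.
Definition gone d : word d := [::].
Definition ginv d k (u : word d) : word d := rev (map (fun x => (x.1, k - x.2)) u).
Definition alpha d k (i : 'I_d.+1) : word d := push k (i, 1) [::].

(* K_J = subgroup generated by the alpha_j, j in J.  Since alpha_j^{-1} =
   alpha_j^{k-1}, it consists of the finite products of generators. *)
Definition inK d k (J : {set 'I_d.+1}) (g : word d) : Prop :=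
  exists s : seq 'I_d.+1, all (fun i => i \in J) s /\
    g = foldr (fun i acc => gmul k (alpha k i) acc) (gone d) s.

Definition is_subgroup d k (H : word d -> Prop) : Prop :=
  (forall g, H g -> reduced k g) /\ H (gone d) /\
  (forall g h, H g -> H h -> H (gmul k g h)) /\
  (forall g, H g -> H (ginv k g)).

Definition hat d (J : {set 'I_d.+1}) : {set 'I_d.+1} := ~: J.

(* [K_{hat J} g]_H = [K_{hat J} g']_H : the double cosets K_{hat J} g H agree *)
Definition samecls d k (H : word d -> Prop) (J : {set 'I_d.+1}) (g g' : word d) : Prop :=
  exists x h, inK k (hat J) x /\ H h /\ g' = gmul k (gmul k x g) h.

(* A multicell of dimension |J|-1 is represented by a pair (J, g) with g
   reduced; it stands for the class [K_{hat J} g]_H. *)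
Definition mcell d := ({set 'I_d.+1} * word d)%type.

Definition valid d k (c : mcell d) : Prop := reduced k c.2.

Definition same_mcell d k (H : word d -> Prop) (c c' : mcell d) : Prop :=
  c.1 = c'.1 /\ samecls k H c.1 c.2 c'.2.

(* containment: [K_{hat I} g]_H <= [K_{hat J} g]_H for I \subset J, for a
   common representative g *)
Definition mle d k (H : word d -> Prop) (c c' : mcell d) : Prop :=
  c.1 \subset c'.1 /\
  exists g, reduced k g /\ samecls k H c.1 c.2 g /\ samecls k H c'.1 c'.2 g.

(* Link graph of a multicell a = (J,g): vertices are the (j+1)-multicells
   containing a, edges the (j+2)-multicells containing a; an edge joins the
   vertices it contains.  [link_step] relates two vertices which are the same
   multicell or are joined by an edge. *)
Definition link_vertex d k (H : word d -> Prop) (a v : mcell d) : Prop :=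
  valid k v /\ #|v.1| = #|a.1|.+1 /\ mle k H a v.

Definition link_step d k (H : word d -> Prop) (a : mcell d) (v w : mcell d) : Prop :=
  link_vertex k H a v /\ link_vertex k H a w /\
  (same_mcell k H v w \/
   exists e : mcell d, valid k e /\ #|e.1| = #|a.1|.+2 /\ mle k H a e /\
     mle k H v e /\ mle k H w e).

(* link-connected: for every multicell a of dimension j <= d-2 (i.e.
   |J| <= d-1, including the empty multicell J = set0), the link graph is
   connected. *)
Definition link_connected d k (H : word d -> Prop) : Prop :=
  forall a : mcell d, valid k a -> (#|a.1|.+1 <= d)%N ->
  forall v w, link_vertex k H a v -> link_vertex k H a w ->
    @clos_refl_trans _ (link_step k H a) v w.

From mathcomp Require Import all_boot.
From Stdlib Require Import Relation_Operators.
Set Implicit Arguments. Unset Strict Implicit. Unset Printing Implicit Defensive.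

(* The link of [K_{hat J} g0]_H has as vertices the classes
   [K_{hat (p |: J)} g]_H with p \notin J and g in K_{hat J} g0 H.  Two such
   vertices over distinct indices p != q that share a representative g are
   joined by the edge [K_{hat (p |: q |: J)} g]_H.  As |hat J| >= 2 one can
   always pivot through a further index, and for i \notin J the vertex over
   any index p' \notin J, p' != i, contains both g and alpha_i g, because
   alpha_i \in K_{hat (p' |: J)}.  Walking along a word in the generators of
   K_{hat J} therefore connects every vertex to [K_{hat (p0 |: J)} g0]_H. *)

Lemma clos_rt_sym T (R : T -> T -> Prop) :
  (forall x y, R x y -> R y x) ->
  forall x y, clos_refl_trans _ R x y -> clos_refl_trans _ R y x.
Proof.
move=> Rsym x y; elim=> [{}x {}y /Rsym|{}x|x1 x2 x3 _ IH12 _ IH23].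
- exact: rt_step.
- exact: rt_refl.
- exact: rt_trans IH23 IH12.
Qed.

Lemma clos_rt_sub T (R S : T -> T -> Prop) :
  (forall x y, R x y -> S x y) ->
  forall x y, clos_refl_trans _ R x y -> clos_refl_trans _ S x y.
Proof.
move=> RS x y; elim=> [{}x {}y /RS|{}x|x1 x2 x3 _ IH12 _ IH23].
- exact: rt_step.
- exact: rt_refl.
- exact: rt_trans IH12 IH23.
Qed.

Lemma setU1_card_succ (T : finType) (J V : {set T}) :
  J \subset V -> #|V| = #|J|.+1 -> exists2 p, p \notin J & V = p |: J.
Proof.
move=> JV cardV.
have : 0 < #|V :\: J| by rewrite cardsD (setIidPr JV) cardV subSn.
case/card_gt0P => p; rewrite in_setD => /andP [pJ pV].
exists p => //; apply/eqP; rewrite eq_sym eqEcard cardV cardsU1 pJ leqnn andbT.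
by apply/subsetP => x; rewrite in_setU1 => /orP [/eqP ->|/(subsetP JV)].
Qed.

Lemma exists_notin_neq d (J : {set 'I_d.+1}) (p : 'I_d.+1) :
  #|J|.+1 <= d -> exists2 q, q \notin J & q != p.
Proof.
move=> small_J; have : 1 < #|~: J|.
  by rewrite -(ltn_add2l #|J|) cardsC card_ord addn1 ltnS.
case/card_gt1P => x [y] []; rewrite !in_setC => xJ yJ xy.
have [xp|xp] := eqVneq x p; last by exists x.
by exists y; rewrite // -xp eq_sym.
Qed.

Section NormalForms.

Variables d k : nat.
Hypothesis k_gt0 : 0 < k.

Definition lead_exp (i : 'I_d.+1) (z : word d) : nat :=
  if z is y :: _ then (if y.1 == i then y.2 else 0) else 0.

Definition drop_lead (i : 'I_d.+1) (z : word d) : word d :=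
  if z is y :: z' then (if y.1 == i then z' else z) else z.

Definition cons_pow (i : 'I_d.+1) (c : nat) (t : word d) : word d :=
  if c == 0 then t else (i, c) :: t.

Definition head_neq (i : 'I_d.+1) (t : word d) : bool :=
  if t is y :: _ then y.1 != i else true.

Lemma reduced_cons (y : letter d) z :
  reduced k (y :: z) = [&& 0 < y.2 < k, reduced k z & head_neq y.1 z].
Proof.
rewrite /reduced /=; case: z => [|y' z] /=; first by rewrite !andbT.
rewrite [y'.1 == _]eq_sym.
by case: (0 < y.2 < k); case: (0 < y'.2 < k); case: (all _ _); case: (y.1 != y'.1);
  case: (match z with [::] => true | _ => _ end).
Qed.

Lemma pushE (i : 'I_d.+1) a z : reduced k z ->
  push k (i, a) z = cons_pow i ((a + lead_exp i z) %% k) (drop_lead i z).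
Proof.
case: z => [|y z] /=; first by rewrite addn0.
rewrite reduced_cons => /and3P [/andP [y_gt0 y_ltk] _ _].
rewrite /push /cons_pow /=.
have [<-|_] := eqVneq y.1 i; last by rewrite addn0.
case: eqP => [a0|_]; last by rewrite modnDml.
by rewrite -modnDml a0 add0n modn_small // gtn_eqF //; case: y y_gt0 y_ltk.
Qed.

Lemma lead_exp_cons_pow (i : 'I_d.+1) c t :
  head_neq i t -> lead_exp i (cons_pow i c t) = c.
Proof.
rewrite /cons_pow; case: eqP => [->|_] /=; last by rewrite eqxx.
by case: t => [|y t] //= /negbTE ->.
Qed.

Lemma drop_lead_cons_pow (i : 'I_d.+1) c t :
  head_neq i t -> drop_lead i (cons_pow i c t) = t.
Proof.
rewrite /cons_pow; case: eqP => [_|_] /=; last by rewrite eqxx.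
by case: t => [|y t] //= /negbTE ->.
Qed.

Lemma reduced_cons_pow (i : 'I_d.+1) c t :
  reduced k t -> head_neq i t -> c < k -> reduced k (cons_pow i c t).
Proof.
rewrite /cons_pow; case: eqP => [_|c0] //= red_t ht c_ltk.
by rewrite reduced_cons /= red_t ht c_ltk !andbT lt0n; apply/eqP.
Qed.

Lemma reduced_drop_lead (i : 'I_d.+1) z :
  reduced k z -> reduced k (drop_lead i z) && head_neq i (drop_lead i z).
Proof.
case: z => [|y z] //= red_z; case: eqP => [y_i|y_i] /=.
  by move: red_z; rewrite reduced_cons y_i => /and3P [_ -> ->].
by rewrite red_z; apply/eqP.
Qed.

Lemma reduced_push (l : letter d) z : reduced k z -> reduced k (push k l z).
Proof.
case: l => i a red_z; rewrite pushE //.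
have /andP [red_t ht] := reduced_drop_lead i red_z.
by apply: reduced_cons_pow; rewrite ?ltn_mod.
Qed.

Lemma reduced_gmul (u v : word d) : reduced k v -> reduced k (gmul k u v).
Proof. by move=> red_v; elim: u => [|l u IH] //=; apply: reduced_push. Qed.

Lemma push_mod (i : 'I_d.+1) a z : push k (i, a %% k) z = push k (i, a) z.
Proof. by rewrite /push /= modn_mod. Qed.

Lemma push_mod0 (i : 'I_d.+1) a z : a %% k = 0 -> push k (i, a) z = z.
Proof. by rewrite /push /= => ->. Qed.

Lemma push_push (i : 'I_d.+1) a b z : reduced k z ->
  push k (i, a) (push k (i, b) z) = push k (i, a + b) z.
Proof.
move=> red_z; have /andP [_ ht] := reduced_drop_lead i red_z.
rewrite (pushE _ _ (reduced_push (i, b) red_z)) ![push k (i, _) z]pushE //.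
by rewrite lead_exp_cons_pow // drop_lead_cons_pow // modnDmr addnA.
Qed.

Lemma push_cons (y : letter d) z : reduced k (y :: z) -> push k y z = y :: z.
Proof.
case: y => i a; rewrite reduced_cons => /and3P [/andP [a_gt0 a_ltk] red_z ht].
have lead0 : lead_exp i z = 0 := lead_exp_cons_pow 0 ht.
have drop0 : drop_lead i z = z := drop_lead_cons_pow 0 ht.
by rewrite pushE // lead0 drop0 addn0 modn_small // /cons_pow gtn_eqF.
Qed.

Lemma gmul1w (z : word d) : reduced k z -> gmul k z (gone d) = z.
Proof.
elim: z => [|y z IH] //= red_yz; move: (red_yz); rewrite reduced_cons.
by case/and3P => _ red_z _; rewrite IH // push_cons.
Qed.

Lemma gmul_push (i : 'I_d.+1) a x g : reduced k x -> reduced k g ->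
  gmul k (push k (i, a) x) g = push k (i, a) (gmul k x g).
Proof.
move=> red_x red_g.
(* Split off the leading alpha_i-syllable of x: both sides become
   alpha_i^(a + lead_exp i x) * (drop_lead i x * g). *)
have split_lead : gmul k x g = push k (i, lead_exp i x) (gmul k (drop_lead i x) g).
  case: x {red_x} => [|y x] /=; first by rewrite push_mod0 ?mod0n.
  by case: eqP => [<-|_]; [case: y | rewrite push_mod0 ?mod0n].
rewrite split_lead push_push ?reduced_gmul // pushE // /cons_pow.
by case: eqP => [/push_mod0 -> //|_] /=; rewrite push_mod.
Qed.

Lemma gmulA (u v w : word d) : reduced k v -> reduced k w ->
  gmul k (gmul k u v) w = gmul k u (gmul k v w).
Proof.
move=> red_v red_w; elim: u => [|[i a] u IH] //=.
by rewrite gmul_push ?reduced_gmul // IH.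
Qed.

Definition gen_prod (s : seq 'I_d.+1) : word d :=
  foldr (fun i acc => gmul k (alpha k i) acc) (gone d) s.

Lemma reduced_alpha (i : 'I_d.+1) : reduced k (alpha k i).
Proof. exact: reduced_push. Qed.

Lemma reduced_gen_prod s : reduced k (gen_prod s).
Proof. by elim: s => [|i s IH] //=; apply: reduced_gmul. Qed.

Lemma gmul_gen_prod_cons (i : 'I_d.+1) s g : reduced k g ->
  gmul k (gen_prod (i :: s)) g = gmul k (alpha k i) (gmul k (gen_prod s) g).
Proof. by move=> red_g; rewrite gmulA ?reduced_gen_prod. Qed.

Lemma inK_gen_prod (S : {set 'I_d.+1}) s :
  all (mem S) s -> inK k S (gen_prod s).
Proof. by exists s. Qed.

Lemma inK_alpha (S : {set 'I_d.+1}) i : i \in S -> inK k S (alpha k i).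
Proof.
move=> iS; exists [:: i]; split; first by rewrite /= iS.
by rewrite /= gmul1w // reduced_alpha.
Qed.

End NormalForms.

Section Link.

Variables (d k : nat) (H : word d -> Prop).
Hypotheses (k_gt0 : 0 < k) (H1 : H (gone d)).

Lemma samecls_mull J x g :
  inK k (hat J) x -> reduced k g -> samecls k H J g (gmul k x g).
Proof. by move=> Kx red_g; exists x, (gone d); rewrite gmul1w ?reduced_gmul. Qed.

Lemma samecls_refl J g : reduced k g -> samecls k H J g g.
Proof. by move=> red_g; apply: (@samecls_mull J (gone d)) => //; exists [::]. Qed.

Variables (J : {set 'I_d.+1}) (g0 : word d).
Hypotheses (red_g0 : reduced k g0) (small_J : #|J|.+1 <= d).

Local Notation a := (J, g0).

Definition link_adj (v w : mcell d) : Prop :=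
  link_step k H a v w /\ link_step k H a w v.

Local Notation link_path := (clos_refl_trans _ link_adj).

Lemma link_path_sym v w : link_path v w -> link_path w v.
Proof. by apply: clos_rt_sym => x y [? ?]. Qed.

Lemma mle_common_rep (I I' : {set 'I_d.+1}) g g' :
  I \subset I' -> reduced k g' ->
  samecls k H I g g' -> mle k H (I, g) (I', g').
Proof.
move=> sub_I red_g' cls_g; split => //.
by exists g'; do !split => //; apply: samecls_refl.
Qed.

Lemma link_vertexU1 p g : p \notin J -> reduced k g ->
  samecls k H J g0 g -> link_vertex k H a (p |: J, g).
Proof.
move=> pJ red_g cls_g; split; first done.
by split; [rewrite cardsU1 pJ | apply: mle_common_rep; rewrite ?subsetUr].
Qed.

Lemma link_adj_common p q g g' :
  p \notin J -> q \notin J -> p != q -> reduced k g' ->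
  link_vertex k H a (p |: J, g) -> samecls k H (p |: J) g g' ->
  samecls k H J g0 g' -> link_adj (p |: J, g) (q |: J, g').
Proof.
move=> pJ qJ pq red_g' vert_p cls_p cls_a.
have vert_q := link_vertexU1 qJ red_g' cls_a.
pose e : mcell d := (p |: (q |: J), g').
have card_e : #|e.1| = #|J|.+2.
  by rewrite cardsU1 in_setU1 negb_or pq pJ cardsU1 qJ.
have mle_a : mle k H a e.
  by apply: mle_common_rep => //; apply: subset_trans (subsetUr [set q] J) (subsetUr _ _).
have mle_p : mle k H (p |: J, g) e.
  by apply: mle_common_rep; rewrite ?setUS ?subsetUr.
have mle_q : mle k H (q |: J, g') e.
  by apply: mle_common_rep; rewrite ?subsetUr //; apply: samecls_refl.
by split; do 2 (split; first done); right; exists e.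
Qed.

Lemma link_path_index p q g : p \notin J -> q \notin J -> reduced k g ->
  samecls k H J g0 g -> link_path (p |: J, g) (q |: J, g).
Proof.
move=> pJ qJ red_g cls_g.
have [<-|pq] := eqVneq p q; first exact: rt_refl.
apply/rt_step/link_adj_common => //; first exact: link_vertexU1.
exact: samecls_refl.
Qed.

Lemma link_path_gen_prod p0 s p :
  p0 \notin J -> all (mem (hat J)) s -> p \notin J ->
  link_path (p |: J, gmul k (gen_prod k s) g0) (p0 |: J, g0).
Proof.
move=> p0J; elim: s p => [|i s IH] p /=.
  by move=> _ pJ; apply: link_path_index => //; apply: samecls_refl.
case/andP; rewrite in_setC => iJ sJ pJ.
set g := gmul k (gen_prod k s) g0.
have red_g : reduced k g by apply: reduced_gmul.
have cls_g : samecls k H J g0 g by apply: samecls_mull => //; apply: inK_gen_prod.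
have cls_ig : samecls k H J g0 (gmul k (alpha k i) g).
  rewrite -gmul_gen_prod_cons //; apply: samecls_mull => //.
  by apply: inK_gen_prod; rewrite /= in_setC iJ.
rewrite gmul_gen_prod_cons //.
have red_ig : reduced k (gmul k (alpha k i) g) by apply: reduced_gmul.
apply: rt_trans (link_path_index pJ iJ red_ig cls_ig) _.
have [p' p'J p'i] := exists_notin_neq i small_J.
apply: rt_trans (IH p' sJ p'J); apply/link_path_sym/rt_step.
apply: link_adj_common => //; first exact: link_vertexU1.
apply: samecls_mull => //; apply: inK_alpha => //.
by rewrite /hat !inE negb_or iJ eq_sym p'i.
Qed.

Lemma link_path_base p0 v : p0 \notin J ->
  link_vertex k H a v -> link_path v (p0 |: J, g0).
Proof.
move=> p0J vert_v; case: v vert_v => V g vert_v.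
have [_ [cardV [/= JV [g1 [red_g1 [cls_a cls_v]]]]]] := vert_v.
have [p pJ defV] := setU1_card_succ JV cardV; subst V.
have [q qJ qp] := exists_notin_neq p small_J.
have [q' q'J q'q] := exists_notin_neq q small_J.
case: (cls_a) => x [h [[s [sJ defx]] [Hh defg1]]]; subst x.
have to_g1 : link_path (p |: J, g) (q |: J, g1).
  by apply/rt_step/link_adj_common; rewrite // eq_sym.
(* g1 = x g0 h with x a product of generators of K_{hat J}: x g0 and g1
   represent the same class over every index, so an edge joins the vertex
   of x g0 over q' to the vertex of g1 over q. *)
have cls_s : samecls k H J g0 (gmul k (gen_prod k s) g0).
  by apply: samecls_mull => //; apply: inK_gen_prod.
have from_s : link_path (q' |: J, gmul k (gen_prod k s) g0) (q |: J, g1).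
  apply/rt_step/link_adj_common => //.
    by apply: link_vertexU1; rewrite ?reduced_gmul.
  by exists (gone d), h; split; first by exists [::].
apply: rt_trans to_g1 _; apply: rt_trans (link_path_sym from_s) _.
exact: link_path_gen_prod.
Qed.

End Link.

Theorem proposition7 (d k : nat) (hd : (1 <= d)%N) (hk : (1 <= k)%N)
  (H : word d -> Prop) (hH : is_subgroup k H) :
  link_connected k H.
Proof.
case: hH => _ [H1 _] [J g0] /= red_g0 small_J v w vert_v vert_w.
have [p0 p0J _] := exists_notin_neq ord0 small_J.
apply: (clos_rt_sub (R := link_adj k H J g0)) => [x y []//|].
apply: rt_trans (link_path_base hk H1 red_g0 small_J p0J vert_v) _.
exact/link_path_sym/link_path_base.
Qed.
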